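(* Let $G=(V,E)$ be a finite, simple, undirected graph with $m=|E|\ge 1$ edges, and let $\mathcal{C}_1,\mathcal{C}_2\subseteq V$ be disjoint nonempty sets with $2m_i^{(1)}+m_e^{(1)}>0$ and $2m_i^{(2)}+m_e^{(2)}>0$, where $m_i^{(j)}$ is the number of edges with both endpoints in $\mathcal{C}_j$ and $m_e^{(j)}$ is the number of edges with exactly one endpoint in $\mathcal{C}_j$ (including edges to the other set). Let $m_e^{(12)}$ be the number of edges with one endpoint in $\mathcal{C}_1$ and the other in $\mathcal{C}_2$, and let $\mathcal{C}=\mathcal{C}_1\cup\mathcal{C}_2$. Then $\Delta\mathcal{P}^{\star}:=\mathcal{P}^{\star}_{\mathcal{C}}-\left(\mathcal{P}^{\star}_{\mathcal{C}_1}+\mathcal{P}^{\star}_{\mathcal{C}_2}\right)>0$ if and only if $$m_e^{(12)}>\frac{2m_i^{(2)}+m_e^{(2)}}{2m_i^{(1)}+m_e^{(1)}}\,m_i^{(1)}+\frac{2m_i^{(1)}+m_e^{(1)}}{2m_i^{(2)}+m_e^{(2)}}\,m_i^{(2)}.$$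
   Context: For a subset $\mathcal{D}\subseteq V$, let $m_i(\mathcal{D})$ be the number of edges with both endpoints in $\mathcal{D}$ and $m_e(\mathcal{D})$ the number of edges with exactly one endpoint in $\mathcal{D}$. The null-adjusted persistence of $\mathcal{D}$ is $\mathcal{P}^{\star}_{\mathcal{D}}=\frac{2m_i(\mathcal{D})}{2m_i(\mathcal{D})+m_e(\mathcal{D})}-\frac{2m_i(\mathcal{D})+m_e(\mathcal{D})}{2m}$, where $m=|E|$. *)

From HB Require Import structures.
From mathcomp Require Import all_boot all_order all_algebra.
Set Implicit Arguments. Unset Strict Implicit. Unset Printing Implicit Defensive.
Import Order.TTheory GRing.Theory Num.Theory.
Local Open Scope ring_scope.

Definition simple_graph (T : finType) (e : rel T) : Prop :=
  symmetric e /\ irreflexive e.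

Definition edges (T : finType) (e : rel T) : {set {set T}} :=
  [set E : {set T} | [exists x, exists y, e x y && (E == [set x; y])]].

Definition nedges (T : finType) (e : rel T) : nat := #|edges e|.

Definition m_int (T : finType) (e : rel T) (D : {set T}) : nat :=
  #|[set E in edges e | E \subset D]|.

Definition m_ext (T : finType) (e : rel T) (D : {set T}) : nat :=
  #|[set E in edges e | #|E :&: D| == 1%N]|.

Definition m_between (T : finType) (e : rel T) (C1 C2 : {set T}) : nat :=
  #|[set E in edges e | (#|E :&: C1| == 1%N) && (#|E :&: C2| == 1%N)]|.

Definition persistence (R : realFieldType) (T : finType) (e : rel T)
    (D : {set T}) : R :=
  (2 * (m_int e D)%:R) / (2 * (m_int e D)%:R + (m_ext e D)%:R)
  - (2 * (m_int e D)%:R + (m_ext e D)%:R) / (2 * (nedges e)%:R).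

(* Each edge is a 2-element set, so sorting the edges by how they meet the
   disjoint sets C1 and C2 gives m_i(C) = m_i(C1) + m_i(C2) + m_e^(12) and
   m_e(C) = m_e(C1) + m_e(C2) - 2 m_e^(12).  Hence the volume v = 2 m_i + m_e
   is additive, v(C) = v1 + v2, and the null-model terms v / 2m cancel in
   the persistence gain, which with i_j = m_i(C_j) and b = m_e^(12) becomes
     2 (i1 + i2 + b) / (v1 + v2) - 2 i1 / v1 - 2 i2 / v2
       = 2 / (v1 + v2) * (b - (v2 / v1 * i1 + v1 / v2 * i2)). *)

From HB Require Import structures.
From mathcomp Require Import all_boot all_order all_algebra.
From mathcomp Require Import zify ring.
Import Order.TTheory GRing.Theory Num.Theory.

Set Implicit Arguments.
Unset Strict Implicit.
Unset Printing Implicit Defensive.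

Lemma card_set_cond_sum (T : finType) (A : {pred T}) (P : pred T) :
  #|[set x in A | P x]| = \sum_(x in A) P x.
Proof.
rewrite -sum1_card big_mkcond [RHS]big_mkcond; apply: eq_bigr => x _.
by rewrite inE; case: (x \in A); case: (P x).
Qed.

Lemma card_edge (T : finType) (e : rel T) (E : {set T}) :
  irreflexive e -> E \in edges e -> #|E| = 2.
Proof.
move=> irr; rewrite inE => /existsP[x /existsP[y /andP[exy /eqP ->]]].
by rewrite cards2; case: eqVneq exy => [-> | //]; rewrite irr.
Qed.

Lemma subset_card2 (T : finType) (E D : {set T}) :
  #|E| = 2 -> (E \subset D) = (#|E :&: D| == 2).
Proof.
move=> E2; apply/idP/eqP => [/setIidPl -> // | ED2].
by apply/setIidPl/eqP; rewrite eqEcard subsetIl ED2 E2.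
Qed.

Lemma cardsI_setU_disjoint (T : finType) (E C1 C2 : {set T}) :
  [disjoint C1 & C2] -> #|E :&: (C1 :|: C2)| = #|E :&: C1| + #|E :&: C2|.
Proof.
move=> dis; rewrite setIUr; apply/eqP; rewrite (leq_card_setU _ _).2.
exact: disjointW (subsetIr _ _) (subsetIr _ _) dis.
Qed.

Section EdgeAcrossDisjointSets.

Variables (T : finType) (E C1 C2 : {set T}).
Hypotheses (E2 : #|E| = 2) (dis : [disjoint C1 & C2]).

Let crossing := (#|E :&: C1| == 1) && (#|E :&: C2| == 1).

Lemma cardsI_setU_le2 : #|E :&: C1| + #|E :&: C2| <= 2.
Proof. by rewrite -cardsI_setU_disjoint // -E2 subset_leq_card ?subsetIl. Qed.

Lemma subset_setU_disjoint :
  (E \subset C1 :|: C2) = (E \subset C1) + (E \subset C2) + crossing :> nat.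
Proof.
move: cardsI_setU_le2; rewrite /crossing !subset_card2 // cardsI_setU_disjoint //.
by case: #|E :&: C1| => [|[|[|?]]]; case: #|E :&: C2| => [|[|[|?]]].
Qed.

Lemma cut_setU_disjoint :
  (#|E :&: (C1 :|: C2)| == 1) + 2 * crossing
    = (#|E :&: C1| == 1) + (#|E :&: C2| == 1) :> nat.
Proof.
move: cardsI_setU_le2; rewrite /crossing cardsI_setU_disjoint //.
by case: #|E :&: C1| => [|[|[|?]]]; case: #|E :&: C2| => [|[|[|?]]].
Qed.

End EdgeAcrossDisjointSets.

Section MergeCounts.

Variables (T : finType) (e : rel T) (C1 C2 : {set T}).
Hypotheses (irr : irreflexive e) (dis : [disjoint C1 & C2]).

Lemma m_int_setU :
  m_int e (C1 :|: C2) = m_int e C1 + m_int e C2 + m_between e C1 C2.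
Proof.
rewrite /m_int /m_between !card_set_cond_sum -!big_split /=.
by apply: eq_bigr => E /(card_edge irr) E2; rewrite subset_setU_disjoint.
Qed.

Lemma m_ext_setU :
  m_ext e (C1 :|: C2) + 2 * m_between e C1 C2 = m_ext e C1 + m_ext e C2.
Proof.
rewrite /m_ext /m_between !card_set_cond_sum big_distrr -!big_split /=.
by apply: eq_bigr => E /(card_edge irr) E2; rewrite cut_setU_disjoint.
Qed.

(* The volume of D, i.e. the sum of the degrees of its vertices. *)
Definition volume (D : {set T}) : nat := 2 * m_int e D + m_ext e D.

Lemma volume_setU : volume (C1 :|: C2) = volume C1 + volume C2.
Proof. by rewrite /volume; have := m_ext_setU; rewrite m_int_setU; lia. Qed.

End MergeCounts.

Local Open Scope ring_scope.

Lemma persistenceE (R : realFieldType) (T : finType) (e : rel T) (D : {set T}) :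
  persistence R e D
    = 2 * (m_int e D)%:R / (volume e D)%:R
      - (volume e D)%:R / (2 * (nedges e)%:R).
Proof. by rewrite /persistence /volume natrD natrM. Qed.

Lemma merge_gain_gt0 (R : realFieldType) (v1 v2 i1 i2 b : R) :
  0 < v1 -> 0 < v2 ->
  (0 < 2 * (i1 + i2 + b) / (v1 + v2) - (2 * i1 / v1 + 2 * i2 / v2))
    = (v2 / v1 * i1 + v1 / v2 * i2 < b).
Proof.
move=> v1_gt0 v2_gt0; have v_gt0 : 0 < v1 + v2 by rewrite addr_gt0.
have -> : 2 * (i1 + i2 + b) / (v1 + v2) - (2 * i1 / v1 + 2 * i2 / v2)
          = 2 / (v1 + v2) * (b - (v2 / v1 * i1 + v1 / v2 * i2)).
  by field; rewrite ?gt_eqF.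
by rewrite pmulr_rgt0 ?subr_gt0 ?divr_gt0.
Qed.

Theorem proposition5 (R : realFieldType) (T : finType) (e : rel T)
  (C1 C2 : {set T}) :
  simple_graph e ->
  (1 <= nedges e)%N ->
  [disjoint C1 & C2] ->
  C1 != set0 -> C2 != set0 ->
  (0 < 2 * m_int e C1 + m_ext e C1)%N ->
  (0 < 2 * m_int e C2 + m_ext e C2)%N ->
  let v1 : R := 2 * (m_int e C1)%:R + (m_ext e C1)%:R in
  let v2 : R := 2 * (m_int e C2)%:R + (m_ext e C2)%:R in
  (0 < persistence R e (C1 :|: C2) - (persistence R e C1 + persistence R e C2))
  <->
  ((m_between e C1 C2)%:R > v2 / v1 * (m_int e C1)%:R + v1 / v2 * (m_int e C2)%:R).
Proof.
move=> [_ irr] _ dis _ _ vol1_gt0 vol2_gt0 v1 v2.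
have v1E : v1 = (volume e C1)%:R by rewrite /volume natrD natrM.
have v2E : v2 = (volume e C2)%:R by rewrite /volume natrD natrM.
have v1_gt0 : 0 < v1 by rewrite v1E ltr0n.
have v2_gt0 : 0 < v2 by rewrite v2E ltr0n.
rewrite -merge_gain_gt0 // !persistenceE volume_setU // natrD -v1E -v2E.
rewrite m_int_setU // !natrD.
have null_terms_cancel (a a1 a2 k : R) :
  a - (v1 + v2) * k - ((a1 - v1 * k) + (a2 - v2 * k)) = a - (a1 + a2).
  by ring.
by rewrite null_terms_cancel.
Qed.
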